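(* Let $\mathbb{M}$ be a flow monoid with idempotent addition, and consider flow graphs whose edge functions are continuous, distributive and decreasing. Then: (a) for every such flow graph $h=(X,E,\mathit{in}_0)$, every inflow $\mathit{in}$, $y\in X$ and $z\in\mathbb{N}\setminus X$, $\mathsf{tf}(h)(\mathit{in})(y,z)=\sum_{x\in X}\sum_{p\in\mathrm{SPaths}_h(x\to(y,z))}E_p(\mathit{in}_x)$; (b) for such flow graphs $h_1,h_2$ with the same node set $X$, $\mathsf{tf}(h_1)=\mathsf{tf}(h_2)$ if and only if simple path replacement of $h_1$ by $h_2$ and of $h_2$ by $h_1$ both hold.
   Context: A flow monoid is a commutative monoid $(\mathbb{M},+,0)$ such that $n\le m :\iff \exists o.\ m=n+o$ is a partial order in which every ascending chain $K$ has a least upper bound $\bigsqcup K$, and $n+\bigsqcup K=\bigsqcup(n+K)$. Addition is idempotent if $m+m=m$. A function $f$ is continuous if it commutes with least upper bounds of ascending chains, distributive if $f(m+n)=f(m)+f(n)$ and $f(0)=0$, decreasing if $f(m)\le m$. Sums and $\le$ on functions are pointwise; empty sums are $0$. A flow graph is $h=(X,E,\mathit{in})$ with $X\subseteq\mathbb{N}$ finite, $E:X\times\mathbb{N}\to$ continuous functions $\mathbb{M}\to\mathbb{M}$, $\mathit{in}:(\mathbb{N}\setminus X)\times X\to\mathbb{M}$; $\mathit{in}_x=\sum_{y\notin X}\mathit{in}(y,x)$ (infinite sums as least upper bounds of finite partial sums); the flow is the least $\mathit{flow}:X\to\mathbb{M}$ with $\mathit{flow}(x)=\mathit{in}_x+\sum_{y\in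 X}E(y,x)(\mathit{flow}(y))$; outflow $\mathit{out}(x,y)=E(x,y)(\mathit{flow}(x))$. The transfer function $\mathsf{tf}(h)$ maps each inflow $\mathit{in}'$ to the outflow of $(X,E,\mathit{in}')$. A path through $h$ is $p=x_0\cdots x_nz$ with $x_i\in X$, $z\in\mathbb{N}\setminus X$; it is simple if $x_0,\dots,x_n$ are pairwise distinct. $\mathrm{SPaths}_h(x\to(y,z))$ is the set of simple paths with $x_0=x$, $x_n=y$, final element $z$. $E_p=E(x_n,z)\circ\cdots\circ E(x_0,x_1)$; $E_P=\sum_{q\in P}E_q$. $\mathrm{Out}(h_1,h_2)=\{x\in X\mid\exists z.\ h_1.E(x,z)\neq h_2.E(x,z)\}$. Simple path replacement of $h_1$ by $h_2$: for every $x\in\mathrm{Out}(h_1,h_2)$, $y\in X$, $z\in\mathbb{N}\setminus X$ and every $p\in\mathrm{SPaths}_{h_1}(x\to(y,z))$ there is $P\subseteq\mathrm{SPaths}_{h_2}(x\to(y,z))$ with $E_p\le E_P$. *)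

From mathcomp Require Import all_boot.
From mathcomp Require Import finmap.
From Stdlib Require Import ClassicalEpsilon.

Set Implicit Arguments.
Unset Strict Implicit.
Unset Printing Implicit Defensive.

Local Open Scope fset_scope.

Definition mle {T : Type} (add : T -> T -> T) (n m : T) : Prop :=
  exists o, m = add n o.

Definition is_chain {T : Type} (add : T -> T -> T) (k : nat -> T) : Prop :=
  forall i, mle add (k i) (k i.+1).

Definition is_lub {T : Type} (add : T -> T -> T) (k : nat -> T) (l : T) : Prop :=
  (forall i, mle add (k i) l) /\
  (forall u, (forall i, mle add (k i) u) -> mle add l u).

Record flowMonoid := FlowMonoid {
  fm_car :> Type;
  fm_add : fm_car -> fm_car -> fm_car;
  fm_zero : fm_car;
  fm_addA : forall a b c, fm_add a (fm_add b c) = fm_add (fm_add a b) c;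
  fm_addC : forall a b, fm_add a b = fm_add b a;
  fm_add0 : forall a, fm_add fm_zero a = a;
  (* <= is a partial order (reflexivity/transitivity are automatic) *)
  fm_le_antisym : forall a b, mle fm_add a b -> mle fm_add b a -> a = b;
  fm_chain_lub : forall k, is_chain fm_add k -> exists l, is_lub fm_add k l;
  fm_add_lub : forall n k l, is_chain fm_add k -> is_lub fm_add k l ->
                 is_lub fm_add (fun i => fm_add n (k i)) (fm_add n l)
}.

Section FlowDefs.
Variable M : flowMonoid.

Local Notation "a + b" := (fm_add a b).
Local Notation "0" := (fm_zero M).
Local Notation "a <= b" := (mle (@fm_add M) a b).

Definition idempotent_add : Prop := forall m : M, m + m = m.

Definition lub (k : nat -> M) : M :=
  epsilon (inhabits 0) (is_lub (@fm_add M) k).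

Definition msum {T : Type} (s : seq T) (F : T -> M) : M :=
  foldr (fun i acc => F i + acc) 0 s.

Definition continuous (f : M -> M) : Prop :=
  forall k l, is_chain (@fm_add M) k -> is_lub (@fm_add M) k l ->
    is_lub (@fm_add M) (fun i => f (k i)) (f l).

Definition distributive (f : M -> M) : Prop :=
  (forall m n, f (m + n) = f m + f n) /\ f 0 = 0.

Definition decreasing (f : M -> M) : Prop := forall m, f m <= m.

(* Flow graphs h = (X, E, in).                                          *)
(* X : finite set of nodes; E x z : M -> M the edge function (only     *)
(* meaningful for x \in X); an inflow is  inf : nat -> nat -> M, where  *)
(* inf y x is only meaningful for y \notin X, x \in X.                  *)

Definition good_edges (X : {fset nat}) (E : nat -> nat -> M -> M) : Prop :=
  forall x z, x \in X ->
    continuous (E x z) /\ distributive (E x z) /\ decreasing (E x z).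

(* in_x = sum_{y \notin X} in(y,x) : the lub of the finite partial sums *)
Definition inflow_at (X : {fset nat}) (inf : nat -> nat -> M) (x : nat) : M :=
  lub (fun n => msum [seq y <- iota 0 n | y \notin X] (fun y => inf y x)).

Definition is_flow (X : {fset nat}) (E : nat -> nat -> M -> M)
    (inx : nat -> M) (fl : nat -> M) : Prop :=
  forall x, x \in X -> fl x = inx x + msum X (fun y => E y x (fl y)).

Definition is_least_flow (X : {fset nat}) (E : nat -> nat -> M -> M)
    (inx : nat -> M) (fl : nat -> M) : Prop :=
  is_flow X E inx fl /\
  forall fl', is_flow X E inx fl' -> forall x, x \in X -> fl x <= fl' x.

Definition flow (X : {fset nat}) (E : nat -> nat -> M -> M) (inf : nat -> nat -> M)
    : nat -> M :=
  epsilon (inhabits (fun _ => 0)) (is_least_flow X E (inflow_at X inf)).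

Definition tf (X : {fset nat}) (E : nat -> nat -> M -> M) (inf : nat -> nat -> M)
    (x z : nat) : M :=
  E x z (flow X E inf x).

Definition tf_equal (X : {fset nat}) (E1 E2 : nat -> nat -> M -> M) : Prop :=
  forall inf y z, y \in X -> z \notin X -> tf X E1 inf y z = tf X E2 inf y z.

(* Paths. A path x_0 ... x_n z is represented by the node sequence     *)
(* [:: x_0; ...; x_n] together with the final element z.               *)

Fixpoint pathf_from (E : nat -> nat -> M -> M) (x : nat) (s : seq nat) (z : nat)
    : M -> M :=
  match s with
  | [::] => E x z
  | y :: s' => fun m => pathf_from E y s' z (E x y m)
  end.

Definition pathf (E : nat -> nat -> M -> M) (p : seq nat) (z : nat) : M -> M :=
  match p with
  | [::] => id
  | x :: s => pathf_from E x s z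
  end.

Definition is_spath (X : {fset nat}) (x y : nat) (p : seq nat) : bool :=
  [&& p != [::], uniq p, all (fun v => v \in X) p,
      head x p == x & last x p == y].

Fixpoint words (s : seq nat) (n : nat) : seq (seq nat) :=
  match n with
  | 0 => [:: [::]]
  | n'.+1 => [seq v :: w | v <- s, w <- words s n']
  end.

(* SPaths_h(x -> (y, z)) as a list (a simple path has at most #|X| nodes;
   it does not depend on z, which only occurs as the final element) *)
Definition spaths (X : {fset nat}) (x y : nat) : seq (seq nat) :=
  [seq p <- flatten [seq words X n | n <- iota 1 (size X)] | is_spath X x y p].

Definition Out (X : {fset nat}) (E1 E2 : nat -> nat -> M -> M) (x : nat) : Prop :=
  x \in X /\ exists z, E1 x z <> E2 x z.

Definition spr (X : {fset nat}) (E1 E2 : nat -> nat -> M -> M) : Prop :=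
  forall x y z, Out X E1 E2 x -> y \in X -> z \notin X ->
    forall p, is_spath X x y p ->
      exists P : seq (seq nat), all (is_spath X x y) P /\
        forall m, pathf E1 p z m <= msum P (fun q => pathf E2 q z m).
End FlowDefs.

From Pilot Require Import Defs.
From mathcomp Require Import all_boot.
From mathcomp Require Import finmap.
From Stdlib Require Import ClassicalEpsilon Classical.
Local Open Scope fset_scope.

Set Implicit Arguments.
Unset Strict Implicit.
Unset Printing Implicit Defensive.

(* When addition is idempotent, the order induced by + is a join semilattice
   with join +, so a finite sum is the least upper bound of its terms, and
   distributive edge functions are monotone.  Since edge functions are also
   decreasing, the flow carried along a walk is bounded by the flow carried
   along the simple path obtained by cutting out its loops ([shortcut]).
   Consequently the path-sum candidate
       fl(v) = sum_x sum_{p in SPaths(x -> v)} E_p(in_x)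
   solves the flow equation and lies below every solution: it is the least
   flow, and applying the last edge gives part (a).

   Part (b): if tf(h1) = tf(h2), feeding a single value m into node x makes
   the sum of part (a) collapse to the simple paths starting at x, which
   yields the replacement set SPaths_{h2}(x -> (y,z)).  Conversely, path
   replacement bounds every simple h1-path by simple h2-paths (induction
   along the path, shortcutting where the path follows unchanged edges), so
   tf(h1) <= tf(h2) by part (a), and antisymmetry concludes. *)

Section FlowMonoidTheory.
Variable M : flowMonoid.
Local Infix "⊕" := (@fm_add M) (at level 50, left associativity).
Local Infix "≼" := (mle (@fm_add M)) (at level 70).
Local Notation z0 := (fm_zero M).

Lemma addm0 (a : M) : a ⊕ z0 = a.
Proof. by rewrite fm_addC fm_add0. Qed.

Lemma le_refl (a : M) : a ≼ a.
Proof. by exists z0; rewrite addm0. Qed.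

Lemma le_trans (a b c : M) : a ≼ b -> b ≼ c -> a ≼ c.
Proof. by move=> [o1 ->] [o2 ->]; exists (o1 ⊕ o2); rewrite fm_addA. Qed.

Lemma le0 (a : M) : z0 ≼ a.
Proof. by exists a; rewrite fm_add0. Qed.

Lemma le_addr (a b : M) : a ≼ a ⊕ b.
Proof. by exists b. Qed.

Lemma le_addl (a b : M) : b ≼ a ⊕ b.
Proof. by exists a; rewrite fm_addC. Qed.

Lemma addACA (a b c d : M) : (a ⊕ b) ⊕ (c ⊕ d) = (a ⊕ c) ⊕ (b ⊕ d).
Proof. by rewrite -!fm_addA; congr (_ ⊕ _); rewrite !fm_addA (fm_addC b c). Qed.

Lemma dist_mono (f : M -> M) (a b : M) :
  Defs.distributive f -> a ≼ b -> f a ≼ f b.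
Proof. by move=> [fD _] [o ->]; exists (f o); rewrite fD. Qed.

Lemma dist_msum (f : M -> M) (T : Type) (s : seq T) (F : T -> M) :
  Defs.distributive f -> f (msum s F) = msum s (fun i => f (F i)).
Proof. by move=> [fD f0]; elim: s => //= i s IH; rewrite fD IH. Qed.

Lemma msum_eq_in (T : eqType) (s : seq T) (F G : T -> M) :
  {in s, F =1 G} -> msum s F = msum s G.
Proof.
elim: s => //= i s IH FG; rewrite FG ?mem_head // IH // => j sj.
by apply: FG; rewrite inE sj orbT.
Qed.

Lemma msum0 (T : Type) (s : seq T) : msum s (fun _ => z0) = z0.
Proof. by elim: s => //= _ s ->; rewrite fm_add0. Qed.

Lemma lub_eq (k : nat -> M) (l : M) : is_lub (@fm_add M) k l -> lub k = l.
Proof.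
move=> lub_l; rewrite /lub.
have [ub least] := epsilon_spec (inhabits z0) _ (ex_intro _ l lub_l).
have [_ least_l] := lub_l.
by apply: fm_le_antisym; [apply: least; case: lub_l | apply: least_l].
Qed.

Section Idempotent.
Hypothesis Hidem : idempotent_add M.

Lemma le_join (a b c : M) : a ≼ c -> b ≼ c -> a ⊕ b ≼ c.
Proof.
move=> [o1 e1] [o2 e2]; exists (o1 ⊕ o2).
by rewrite -{1}(Hidem c) {1}e1 {1}e2 addACA.
Qed.

Lemma msum_le (T : eqType) (s : seq T) (F : T -> M) (c : M) :
  (forall i, i \in s -> F i ≼ c) -> msum s F ≼ c.
Proof.
elim: s => [|i s IH] Fc /=; first exact: le0.
apply: le_join; first by apply: Fc; rewrite mem_head.
by apply: IH => j sj; apply: Fc; rewrite inE sj orbT.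
Qed.

Lemma le_msum (T : eqType) (s : seq T) (F : T -> M) (i : T) :
  i \in s -> F i ≼ msum s F.
Proof.
elim: s => // j s IH; rewrite inE => /orP[/eqP ->|si] /=; first exact: le_addr.
exact: le_trans (IH si) (le_addl _ _).
Qed.

Lemma msum_sub (T : eqType) (s1 s2 : seq T) (F : T -> M) :
  {subset s1 <= s2} -> msum s1 F ≼ msum s2 F.
Proof. by move=> s12; apply: msum_le => i /s12; apply: le_msum. Qed.

Lemma msum_indicator (s : seq nat) (z : nat) (m : M) :
  msum s (fun a => if a == z then m else z0) = if z \in s then m else z0.
Proof.
elim: s => //= a s ->; rewrite inE (eq_sym z a).
by case: (a == z); case: (z \in s); rewrite /= ?fm_add0 ?Hidem ?addm0.
Qed.

Definition point_inflow (z x : nat) (m : M) : nat -> nat -> M :=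
  fun a b => if (a == z) && (b == x) then m else z0.

Lemma inflow_point (X : {fset nat}) (z x w : nat) (m : M) : z \notin X ->
  inflow_at X (point_inflow z x m) w = if w == x then m else z0.
Proof.
move=> zX; rewrite /inflow_at; apply: lub_eq.
set v := if w == x then m else z0.
(* the partial sums become constant once they include the source z *)
have partial_sum n : msum [seq a <- iota 0 n | a \notin X]
    (point_inflow z x m ^~ w) = if z < n then v else z0.
  rewrite /point_inflow /v; case: (w == x).
    under msum_eq_in do rewrite andbT.
    by rewrite msum_indicator mem_filter zX mem_iota.
  by under msum_eq_in do rewrite andbF; rewrite msum0; case: (z < n).
split=> [i | u ub]; first by rewrite partial_sum; case: (z < i); [apply: le_refl | apply: le0].
by have := ub z.+1; rewrite partial_sum ltnSn.
Qed.

Section SimplePaths.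
Variable X : {fset nat}.
Local Notation inX s := (all (fun v => v \in X) s).

Lemma mem_words (p : seq nat) : inX p -> p \in words X (size p).
Proof.
elim: p => [|v p IH] //= /andP[vX pX].
by apply: (allpairs_f (fun a w => a :: w)) => //; apply: IH.
Qed.

(* A simple path has at most #|X| nodes, so the enumeration is complete. *)
Lemma mem_spaths (x y : nat) (p : seq nat) :
  (p \in spaths X x y) = is_spath X x y p.
Proof.
rewrite /spaths mem_filter; case sp: (is_spath X x y p) => //=.
move: sp => /and5P[p_nil p_uniq pX _ _].
apply/flatten_mapP; exists (size p); last exact: mem_words.
rewrite mem_iota add1n ltnS lt0n size_eq0 p_nil /=.
by apply: uniq_leq_size => // v /(allP pX).
Qed.

Lemma is_spath_cons (x y : nat) (s : seq nat) :
  uniq (x :: s) -> inX (x :: s) -> last x s = y -> is_spath X x y (x :: s).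
Proof. by move=> s_uniq sX <-; apply/and5P. Qed.

Lemma spathsP (x y : nat) (p : seq nat) : p \in spaths X x y ->
  exists s, [/\ p = x :: s, uniq (x :: s), inX (x :: s) & last x s = y].
Proof.
rewrite mem_spaths; case: p => [|a s] /and5P[//= _ s_uniq sX /eqP /= ax /eqP sy].
by subst a; exists s.
Qed.

End SimplePaths.

Section Walks.
Variable X : {fset nat}.
Variable E : nat -> nat -> M -> M.
Hypothesis HE : good_edges X E.
Local Notation inX s := (all (fun v => v \in X) s).

Fixpoint walkf (x : nat) (s : seq nat) : M -> M :=
  if s is y :: s' then fun m => walkf y s' (E x y m) else id.

Lemma E_dist (x y : nat) : x \in X -> Defs.distributive (E x y).
Proof. by move=> xX; have [_ []] := HE y xX. Qed.

Lemma E_decr (x y : nat) (m : M) : x \in X -> E x y m ≼ m.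
Proof. by move=> xX; have [_ []] := HE y xX. Qed.

Lemma pathf_fromE (x : nat) (s : seq nat) (z : nat) (m : M) :
  pathf_from E x s z m = E (last x s) z (walkf x s m).
Proof. by elim: s x m => //= y s IH x m. Qed.

Lemma walkf_cat (x : nat) (s1 s2 : seq nat) (m : M) :
  walkf x (s1 ++ s2) m = walkf (last x s1) s2 (walkf x s1 m).
Proof. by elim: s1 x m => //= y s1 IH x m. Qed.

Lemma walkf_rcons (x : nat) (s : seq nat) (v : nat) (m : M) :
  walkf x (rcons s v) m = E (last x s) v (walkf x s m).
Proof. by rewrite -cats1 walkf_cat. Qed.

Lemma walkf_mono (x : nat) (s : seq nat) (a b : M) :
  inX (x :: s) -> a ≼ b -> walkf x s a ≼ walkf x s b.
Proof.
elim: s x a b => [|y s IH] x a b /= /andP[xX sX] ab //.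
exact: IH (dist_mono (E_dist _ xX) ab).
Qed.

Lemma walkf_decr (x : nat) (s : seq nat) (m : M) :
  inX (x :: s) -> walkf x s m ≼ m.
Proof.
elim: s x m => [|y s IH] x m /= /andP[xX sX]; first exact: le_refl.
exact: le_trans (IH _ _ sX) (E_decr _ _ xX).
Qed.

Lemma pathf_zero (x y z : nat) (p : seq nat) :
  p \in spaths X x y -> pathf E p z z0 = z0.
Proof.
case/spathsP=> s [-> _ sX _] /=; rewrite pathf_fromE.
have walk0 : walkf x s z0 = z0.
  elim: s x sX => [|v s IH] x //= /andP[xX sX].
  by have [_ ->] := E_dist v xX; apply: IH.
have [_ E0] := E_dist z (allP sX _ (mem_last x s)).
by rewrite walk0 E0.
Qed.

(* Loop removal: every walk is dominated by a simple walk with the same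
   endpoints, because traversing a loop can only decrease the flow. *)
Lemma shortcut (x : nat) (s : seq nat) : inX (x :: s) ->
  exists s', [/\ uniq (x :: s'), inX (x :: s'), last x s' = last x s
               & forall m, walkf x s m ≼ walkf x s' m].
Proof.
elim: s x => [|y t IH] x; first by exists [::]; split=> // m; apply: le_refl.
move=> /= /andP[xX tX]; have [t' [t'_uniq t'X t'_last t'_le]] := IH y tX.
have yt'X : inX (x :: y :: t') by rewrite /= xX.
have [x_yt'|x_yt'] := boolP (x \in y :: t'); last first.
  by exists (y :: t'); split=> //=; rewrite x_yt'.
(* x reoccurs: cut the loop x :: a ++ [x] and keep the simple tail x :: b *)
have [a [b yt'E]] : exists a b, y :: t' = a ++ x :: b.
  by case/splitPr: x_yt' => a b; exists a, b.
have lastE : last x b = last x (y :: t') by rewrite yt'E last_cat.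
rewrite yt'E -cat_cons in t'_uniq yt'X.
have /andP[loopX bX] : inX (rcons (x :: a) x) && inX b.
  by rewrite -all_cat cat_rcons.
exists b; split.
- by move: t'_uniq; rewrite cat_uniq => /and3P[].
- by rewrite /= xX.
- by rewrite lastE /= t'_last.
- move=> m; apply: le_trans (t'_le (E x y m)) _.
  rewrite -[walkf y t' _]/(walkf x (y :: t') m) yt'E -cat_rcons walkf_cat last_rcons.
  by apply: walkf_mono (walkf_decr _ loopX); rewrite /= xX.
Qed.

Definition seqwalkf (p : seq nat) : M -> M := if p is x :: s then walkf x s else id.

Definition path_flow (inx : nat -> M) (v : nat) : M :=
  msum X (fun x => msum (spaths X x v) (fun p => seqwalkf p (inx x))).

Lemma walk_le_path_flow (inx : nat -> M) (x : nat) (s : seq nat) :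
  x \in X -> inX (x :: s) -> walkf x s (inx x) ≼ path_flow inx (last x s).
Proof.
move=> xX sX; have [s' [s'_uniq s'X <- s'_le]] := shortcut sX.
apply: le_trans (s'_le _) _.
apply: le_trans _ (le_msum (fun x => msum (spaths X x _) _) xX).
apply: (le_msum (fun p => seqwalkf p (inx x)) (i := x :: s')).
by rewrite mem_spaths is_spath_cons.
Qed.

Lemma path_flow_le_eqn (inx : nat -> M) (v : nat) : v \in X ->
  path_flow inx v ≼ inx v ⊕ msum X (fun u => E u v (path_flow inx u)).
Proof.
move=> vX; apply: msum_le => x xX; apply: msum_le => p /spathsP[s [-> _ sX <-]] /=.
case/lastP: s sX => [|t u] sX; first exact: le_addr.
(* a nontrivial path x :: t ++ [u] ends with the edge from w := last x t *)
rewrite walkf_rcons last_rcons.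
have tX : inX (x :: t) by move: sX; rewrite -rcons_cons all_rcons => /andP[].
have wX : last x t \in X by apply: (allP tX); apply: mem_last.
apply: le_trans (dist_mono (E_dist _ wX) (walk_le_path_flow inx xX tX)) _.
apply: le_trans (le_addl (inx u) _).
exact: (le_msum (fun w => E w u (path_flow inx w))).
Qed.

Lemma eqn_le_path_flow (inx : nat -> M) (v : nat) : v \in X ->
  inx v ⊕ msum X (fun u => E u v (path_flow inx u)) ≼ path_flow inx v.
Proof.
move=> vX; apply: le_join.
  by apply: (walk_le_path_flow inx (s := [::]) vX); rewrite /= vX.
apply: msum_le => u uX; rewrite [path_flow inx u]/path_flow (dist_msum _ _ (E_dist v uX)).
apply: msum_le => x xX; rewrite (dist_msum _ _ (E_dist v uX)).
apply: msum_le => p /spathsP[s [-> _ sX su]] /=.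
(* extending a simple path into u by the edge (u, v) gives a walk into v *)
have := @walk_le_path_flow inx x (rcons s v) xX.
rewrite last_rcons walkf_rcons su; apply.
by rewrite -rcons_cons all_rcons vX.
Qed.

Lemma path_flow_is_flow (inx : nat -> M) : is_flow X E inx (path_flow inx).
Proof.
by move=> v vX; apply: fm_le_antisym; [apply: path_flow_le_eqn | apply: eqn_le_path_flow].
Qed.

Lemma walk_le_solution (inx fl : nat -> M) (x : nat) (s : seq nat) (m : M) :
  is_flow X E inx fl -> inX (x :: s) -> m ≼ fl x -> walkf x s m ≼ fl (last x s).
Proof.
move=> fl_flow; elim: s x m => [|y s IH] x m /= /andP[xX sX] m_le //.
apply: IH => //; have yX : y \in X by case/andP: sX.
rewrite (fl_flow y yX); apply: le_trans (dist_mono (E_dist y xX) m_le) _.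
apply: le_trans (le_addl (inx y) _).
exact: (le_msum (fun u => E u y (fl u))).
Qed.

Lemma path_flow_least (inx fl : nat -> M) : is_flow X E inx fl ->
  forall v, v \in X -> path_flow inx v ≼ fl v.
Proof.
move=> fl_flow v vX; apply: msum_le => x xX.
apply: msum_le => p /spathsP[s [-> _ sX <-]] /=.
by apply: (walk_le_solution fl_flow sX); rewrite (fl_flow x xX); apply: le_addr.
Qed.

Lemma flow_path_flow (inf : nat -> nat -> M) (v : nat) : v \in X ->
  flow X E inf v = path_flow (inflow_at X inf) v.
Proof.
move=> vX; set inx := inflow_at X inf.
have least : is_least_flow X E inx (path_flow inx).
  by split; [apply: path_flow_is_flow | apply: path_flow_least].
have [flow_flow flow_least] := epsilon_spec (inhabits (fun _ => z0)) _ (ex_intro _ _ least).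
by apply: fm_le_antisym; [apply: flow_least; case: least | apply: path_flow_least].
Qed.

Lemma tf_spaths (inf : nat -> nat -> M) (y z : nat) : y \in X ->
  tf X E inf y z = msum (X : seq nat) (fun x =>
    msum (spaths X x y) (fun p => pathf E p z (inflow_at X inf x))).
Proof.
move=> yX; rewrite /tf flow_path_flow // /path_flow (dist_msum _ _ (E_dist z yX)).
apply: msum_eq_in => x _; rewrite (dist_msum _ _ (E_dist z yX)).
by apply: msum_eq_in => p /spathsP[s [-> _ _ <-]]; rewrite /= pathf_fromE.
Qed.

Lemma pathf_le_spaths (x y z : nat) (s : seq nat) (m : M) :
  inX (x :: s) -> last x s = y ->
  pathf_from E x s z m ≼ msum (spaths X x y) (fun q => pathf E q z m).
Proof.
move=> sX <-; have [s' [s'_uniq s'X s'_last s'_le]] := shortcut sX.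
have s'_spath : x :: s' \in spaths X x (last x s) by rewrite mem_spaths is_spath_cons.
apply: le_trans _ (le_msum (fun q => pathf E q z m) s'_spath).
have lastX : last x s \in X by apply: (allP sX); apply: mem_last.
by rewrite /= !pathf_fromE s'_last; apply: dist_mono (E_dist z lastX) (s'_le m).
Qed.

Lemma tf_point_inflow (w x y z : nat) (m : M) :
  w \notin X -> x \in X -> y \in X ->
  tf X E (point_inflow w x m) y z = msum (spaths X x y) (fun q => pathf E q z m).
Proof.
move=> wX xX yX; rewrite tf_spaths //.
under msum_eq_in => v _.
  rewrite inflow_point //.
  have -> : msum (spaths X v y) (fun q => pathf E q z (if v == x then m else z0)) =
            if v == x then msum (spaths X x y) (fun q => pathf E q z m) else z0.
    case: eqP => [-> //|_]; rewrite (msum_eq_in (G := fun _ => z0)) ?msum0 //.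
    by move=> q; apply: pathf_zero.
  over.
by rewrite msum_indicator xX.
Qed.

End Walks.

Section Replacement.
Variable X : {fset nat}.
Variables E1 E2 : nat -> nat -> M -> M.
Hypothesis G1 : good_edges X E1.
Hypothesis G2 : good_edges X E2.
Local Notation inX s := (all (fun v => v \in X) s).

(* Equal transfer functions imply path replacement, with P = SPaths_{h2}. *)
Lemma tf_equal_spr : tf_equal X E1 E2 -> spr X E1 E2.
Proof.
move=> tf12 x y z [xX _] yX zX p p_spath; exists (spaths X x y).
split=> [|m]; first exact: filter_all.
have := tf12 (point_inflow z x m) y z yX zX.
rewrite !tf_point_inflow // => <-.
by apply: (le_msum (fun q => pathf E1 q z m)); rewrite mem_spaths.
Qed.

Lemma notOut_edges (x : nat) : x \in X -> ~ Out X E1 E2 x -> forall w, E1 x w = E2 x w.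
Proof. by move=> xX notOut w; apply: NNPP => neq; apply: notOut; split; last exists w. Qed.

Lemma spr_Out_path (x y z : nat) (p : seq nat) (m : M) :
  spr X E1 E2 -> Out X E1 E2 x -> y \in X -> z \notin X -> is_spath X x y p ->
  pathf E1 p z m ≼ msum (spaths X x y) (fun q => pathf E2 q z m).
Proof.
move=> spr12 xOut yX zX p_spath.
have [P [P_spaths P_le]] := spr12 x y z xOut yX zX p p_spath.
apply: le_trans (P_le m) _; apply: msum_sub => q /(allP P_spaths).
by rewrite mem_spaths.
Qed.

(* Path replacement bounds every simple h1-path by simple h2-paths: follow
   the path while its edges are unchanged, and replace it at the first node
   of Out(h1,h2). *)
Lemma spr_simple_path (y z : nat) : spr X E1 E2 -> y \in X -> z \notin X ->
  forall (s : seq nat) (x : nat) (m : M),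
  inX (x :: s) -> uniq (x :: s) -> last x s = y ->
  pathf_from E1 x s z m ≼ msum (spaths X x y) (fun q => pathf E2 q z m).
Proof.
move=> spr12 yX zX; elim=> [|x1 s IH] x m sX s_uniq s_last.
all: have xX : x \in X by case/andP: sX.
all: have [xOut|xnotOut] := classic (Out X E1 E2 x);
  first exact: (spr_Out_path m spr12 xOut yX zX (is_spath_cons s_uniq sX s_last)).
- by rewrite /= notOut_edges //; exact: (pathf_le_spaths G2 z m (s := [::])).
- move: sX s_uniq => /= /andP[_ sX] /andP[_ s_uniq].
  rewrite notOut_edges //; apply: le_trans (IH x1 _ sX s_uniq s_last) _.
  apply: msum_le => q /spathsP[t [-> _ tX t_last]].
  by apply: (pathf_le_spaths G2 z _ (s := x1 :: t)); rewrite /= ?xX.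
Qed.

Lemma spr_tf_le (inf : nat -> nat -> M) (y z : nat) :
  spr X E1 E2 -> y \in X -> z \notin X -> tf X E1 inf y z ≼ tf X E2 inf y z.
Proof.
move=> spr12 yX zX; rewrite (tf_spaths G1) // (tf_spaths G2) //.
apply: msum_le => x xX; apply: msum_le => p /spathsP[s [-> s_uniq sX s_last]].
apply: le_trans (spr_simple_path spr12 yX zX _ sX s_uniq s_last) _.
exact: (le_msum (fun x => msum (spaths X x y) _)).
Qed.

End Replacement.

End Idempotent.
End FlowMonoidTheory.

Theorem theorem5 (M : flowMonoid) (Hidem : idempotent_add M) :
  (* (a) *)
  (forall (X : {fset nat}) (E : nat -> nat -> M -> M),
     good_edges X E ->
     forall (inf : nat -> nat -> M) (y z : nat), y \in X -> z \notin X ->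
       tf X E inf y z =
       msum (X : seq nat) (fun x =>
         msum (spaths X x y) (fun p => pathf E p z (inflow_at X inf x))))
  /\
  (* (b) *)
  (forall (X : {fset nat}) (E1 E2 : nat -> nat -> M -> M),
     good_edges X E1 -> good_edges X E2 ->
     (tf_equal X E1 E2 <-> spr X E1 E2 /\ spr X E2 E1)).
Proof.
split=> [X E HE inf y z yX _ | X E1 E2 G1 G2]; first exact: tf_spaths.
split=> [tf12 | [spr12 spr21] inf y z yX zX].
- split; first exact: tf_equal_spr.
  by apply: tf_equal_spr => // inf y z yX zX; rewrite tf12.
- by apply: fm_le_antisym; apply: spr_tf_le.
Qed.
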